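(* Problem (RO-$\Sigma$) has a feasible solution with $B\le N(N+1)/2$.
   Context: A ballot style consists of contests $\mathcal{C}=\{1,\ldots,C\}$, candidates $\mathcal{N}=\{1,\ldots,N\}$ partitioned into nonempty sets $\mathcal{N}_c$ ($c\in\mathcal{C}$), and positive integers $v_c$. A filled-out ballot is a subset $\beta\subseteq\mathcal{N}$; $\mathscr{B}=\{\beta\subseteq\mathcal{N}: |\mathcal{N}_c\cap\beta|\le v_c\ \forall c\}$. For $i\in\mathcal{N}_c$: $T^*_i(\beta_1,\ldots,\beta_B)=\sum_{b=1}^B\mathbb{I}\{i\in\beta_b\text{ and }|\mathcal{N}_c\cap\beta_b|\le v_c\}$, and for a bijection $\sigma$ of $\mathcal{N}$, $T^\sigma_i(\beta_1,\ldots,\beta_B)=\sum_{b=1}^B\mathbb{I}\{\sigma(i)\in\beta_b\text{ and }|\{\sigma(j)\in\beta_b: j\in\mathcal{N}_c\}|\le v_c\}$. $\Sigma$ is the set of non-identity bijections $\mathcal{N}\to\mathcal{N}$. Problem (RO-$\Sigma$): minimize $B$ over $B\in\mathbb{N}$ and $\beta_1,\ldots,\beta_B\in\mathscr{B}$ subject to $T^\sigma(\beta_1,\ldots,\beta_B)\neq T^*(\beta_1,\ldots,\beta_B)$ for all $\sigma\in\Sigma$. *)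

From mathcomp Require Import all_boot all_order all_fingroup.
Set Implicit Arguments. Unset Strict Implicit. Unset Printing Implicit Defensive.

(* Candidates are 'I_N, contests are 'I_C; [con i] is the contest of candidate i,
   so N_c = [set i | con i == c]; [v c] is the number of votes allowed in c.
   A filled-out ballot is a set of candidates [beta : {set 'I_N}]. *)

Definition cands_in (N C : nat) (con : 'I_N -> 'I_C) (c : 'I_C) : {set 'I_N} :=
  [set i | con i == c].

Definition valid_ballot (N C : nat) (con : 'I_N -> 'I_C) (v : 'I_C -> nat)
  (beta : {set 'I_N}) : bool :=
  [forall c : 'I_C, #|cands_in con c :&: beta| <= v c].

Definition Tstar (N C : nat) (con : 'I_N -> 'I_C) (v : 'I_C -> nat)
  (bs : seq {set 'I_N}) (i : 'I_N) : nat :=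
  count (fun beta : {set 'I_N} => (i \in beta) && (#|cands_in con (con i) :&: beta| <= v (con i))) bs.

Definition Tsig (N C : nat) (con : 'I_N -> 'I_C) (v : 'I_C -> nat)
  (s : {perm 'I_N}) (bs : seq {set 'I_N}) (i : 'I_N) : nat :=
  count (fun beta : {set 'I_N} => (s i \in beta) &&
     (#|[set j | (con j == con i) && (s j \in beta)]| <= v (con i))) bs.

From mathcomp Require Import all_boot all_order all_fingroup.
Set Implicit Arguments. Unset Strict Implicit. Unset Printing Implicit Defensive.

(* Number the candidates 0, ..., N-1 and let the "staircase" profile consist,
   for each candidate k, of k+1 copies of the singleton ballot {k}; it has
   1 + 2 + ... + N = N(N+1)/2 ballots.  A singleton ballot never exceeds a
   positive quota v_c, so every ballot is valid and is counted in full both by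
   T^* and by T^sigma.  Consequently T^*_i = i+1 (only the ballots {i} mention
   candidate i) and T^sigma_i = sigma(i)+1 (only the ballots {sigma(i)}
   mention sigma(i)).  Equal tallies therefore force sigma(i) = i for all i. *)

Section Staircase.

Variable N : nat.

Definition staircase : seq {set 'I_N} :=
  flatten [seq nseq k.+1 [set k] | k : 'I_N <- enum 'I_N].

Lemma count_staircase (P : pred {set 'I_N}) :
  count P staircase = \sum_(k < N) k.+1 * P [set k].
Proof.
rewrite /staircase count_flatten -map_comp sumnE big_map big_enum /=.
by apply: eq_bigr => k _; rewrite count_nseq mulnC.
Qed.

Lemma count_staircase_point (P : pred {set 'I_N}) (x : 'I_N) :
  (forall k : 'I_N, P [set k] = (k == x)) -> count P staircase = x.+1.
Proof.
move=> Psingle; rewrite count_staircase (bigD1 x) //= Psingle eqxx muln1.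
by rewrite big1 ?addn0 // => k /negbTE k_neq_x; rewrite Psingle k_neq_x muln0.
Qed.

Lemma size_staircase : size staircase = N * (N + 1) %/ 2.
Proof.
have sum_succ : \sum_(k < N) k.+1 = \sum_(0 <= i < N.+1) i.
  by rewrite big_mkord big_ord_recl.
rewrite -(count_predT staircase) count_staircase.
under eq_bigr do rewrite muln1.
by rewrite sum_succ bin2_sum bin2 /= -divn2 addn1 mulnC.
Qed.

Lemma staircase_singleton (b : {set 'I_N}) :
  b \in staircase -> exists k : 'I_N, b = [set k].
Proof.
by case/flattenP=> _ /mapP[k _ ->] /nseqP[-> _]; exists k.
Qed.

End Staircase.

Lemma card_sub_set1_le (T : finType) (A : {set T}) (x : T) (m : nat) :
  0 < m -> A \subset [set x] -> #|A| <= m.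
Proof.
by move=> m_gt0 /subset_leq_card; rewrite cards1 => /leq_trans; apply.
Qed.

Section StaircaseTallies.

Variables (N C : nat) (con : 'I_N -> 'I_C) (v : 'I_C -> nat).
Hypothesis v_gt0 : forall c : 'I_C, 0 < v c.

Lemma singleton_valid (k : 'I_N) : valid_ballot con v [set k].
Proof.
by apply/forallP=> c; apply: card_sub_set1_le (v_gt0 c) (subsetIr _ _).
Qed.

Lemma Tstar_staircase (i : 'I_N) : Tstar con v (staircase N) i = i.+1.
Proof.
apply: count_staircase_point => k; rewrite in_set1 eq_sym.
case: eqP => //= _.
exact: card_sub_set1_le (v_gt0 _) (subsetIr _ _).
Qed.

(* Under sigma, candidate i is counted in the ballots {sigma(i)} only:
   the contest-mates j of i with sigma(j) in {sigma(i)} reduce to i itself. *)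
Lemma Tsig_staircase (s : {perm 'I_N}) (i : 'I_N) :
  Tsig con v s (staircase N) i = (s i).+1.
Proof.
apply: count_staircase_point => k; rewrite in_set1 eq_sym.
case: eqP => //= ->.
apply: card_sub_set1_le (v_gt0 _) _; apply/subsetP=> j.
by rewrite !inE => /andP[_ /eqP/perm_inj ->].
Qed.

End StaircaseTallies.

Theorem proposition4 (N C : nat) (con : 'I_N -> 'I_C) (v : 'I_C -> nat)
  (Hsurj : forall c : 'I_C, exists i : 'I_N, con i = c)
  (Hv : forall c : 'I_C, 0 < v c) :
  exists bs : seq {set 'I_N},
    [/\ size bs <= N * (N + 1) %/ 2,
        all (valid_ballot con v) bs &
        forall s : {perm 'I_N}, s != 1%g -> Tsig con v s bs <> Tstar con v bs].
Proof.
exists (staircase N); split.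
- by rewrite size_staircase.
- by apply/allP=> b /staircase_singleton[k ->]; apply: singleton_valid.
- move=> s s_nontrivial equal_tallies; case/eqP: s_nontrivial.
  apply/permP=> i; rewrite perm1.
  have := congr1 (fun T => T i) equal_tallies.
  by rewrite /= (Tsig_staircase con Hv) (Tstar_staircase con Hv) => -[/val_inj].
Qed.
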